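(* Let $i,j,k\ge 0$. Each permutation of one of the forms $21\ominus(\delta_j\oplus\delta_k)$, $\delta_i\ominus(1\oplus\delta_k)$, or $\delta_i\ominus(\delta_j\oplus 1)$ is shallow.
   Context: For $\pi\in S_n$: $D(\pi)=\sum_{i}|\pi_i-i|$, $I(\pi)$ is the number of inversions, $T(\pi)=n-\mathrm{cyc}(\pi)$ with $\mathrm{cyc}$ the number of cycles in the disjoint cycle decomposition; $\pi$ is shallow if $I(\pi)+T(\pi)=D(\pi)$. $\delta_m=m(m-1)\cdots21\in S_m$ is the decreasing permutation ($\delta_0$ is the empty permutation), and $1$ denotes the permutation of length one. For $\alpha\in S_a$, $\beta\in S_b$, the direct sum $\alpha\oplus\beta\in S_{a+b}$ is $\alpha_1\cdots\alpha_a(\beta_1+a)\cdots(\beta_b+a)$ and the skew sum $\alpha\ominus\beta\in S_{a+b}$ is $(\alpha_1+b)\cdots(\alpha_a+b)\beta_1\cdots\beta_b$. *)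

(* Permutations of {1..n} are modelled as 'S_n = {perm 'I_n}
   (0-based; all quantities D, I, T are invariant under the shift). *)
From mathcomp Require Import all_boot all_order all_fingroup.
Set Implicit Arguments. Unset Strict Implicit. Unset Printing Implicit Defensive.

Definition Dstat n (p : 'S_n) : nat :=
  \sum_(i : 'I_n) ((p i - i) + (i - p i))%N.

Definition Istat n (p : 'S_n) : nat :=
  #|[set ij : 'I_n * 'I_n | (ij.1 < ij.2)%N && (p ij.2 < p ij.1)%N]|.

Definition Tstat n (p : 'S_n) : nat := (n - #|porbits p|)%N.

Definition shallow n (p : 'S_n) : Prop := (Istat p + Tstat p)%N = Dstat p.

Definition delta m : 'S_m := perm (@rev_ord_inj m).

Definition dsum_fun a b (al : 'S_a) (be : 'S_b) (i : 'I_(a + b)) : 'I_(a + b) :=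
  match split i with
  | inl x => lshift b (al x)
  | inr y => rshift a (be y)
  end.

Lemma dsum_inj a b (al : 'S_a) (be : 'S_b) : injective (dsum_fun al be).
Proof.
move=> i j; rewrite /dsum_fun -[i]splitK -[j]splitK !unsplitK.
case: (split i) => [x|y]; case: (split j) => [x'|y'] /= /eqP;
  rewrite -val_eqE /=.
- by move/eqP/val_inj/perm_inj ->.
- by move=> /eqP E; move: (ltn_ord (al x)); rewrite E ltnNge leq_addr.
- by move=> /eqP E; move: (ltn_ord (al x')); rewrite -E ltnNge leq_addr.
- by rewrite eqn_add2l => /eqP/val_inj/perm_inj ->.
Qed.

Definition dsum a b (al : 'S_a) (be : 'S_b) : 'S_(a + b) := perm (@dsum_inj a b al be).

Definition ssum_fun a b (al : 'S_a) (be : 'S_b) (i : 'I_(a + b)) : 'I_(a + b) :=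
  cast_ord (addnC b a)
  match split i with
  | inl x => rshift b (al x)
  | inr y => lshift a (be y)
  end.

Lemma ssum_inj a b (al : 'S_a) (be : 'S_b) : injective (ssum_fun al be).
Proof.
move=> i j; rewrite /ssum_fun => /cast_ord_inj.
rewrite -[i]splitK -[j]splitK !unsplitK.
case: (split i) => [x|y]; case: (split j) => [x'|y'] /= /eqP;
  rewrite -val_eqE /=.
- by rewrite eqn_add2l => /eqP/val_inj/perm_inj ->.
- by move=> /eqP E; move: (ltn_ord (be y')); rewrite -E ltnNge leq_addr.
- by move=> /eqP E; move: (ltn_ord (be y)); rewrite E ltnNge leq_addr.
- by move/eqP/val_inj/perm_inj ->.
Qed.

Definition ssum a b (al : 'S_a) (be : 'S_b) : 'S_(a + b) := perm (@ssum_inj a b al be).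

(* Let a < b be consecutive on a cycle of pi, with pi(b) <= a < b <= pi(a) and
   pi(b) < pi(c) < pi(a) for every a < c < b.  Then pi o (a b) has D smaller by
   2(b - a), I smaller by 2(b - a) - 1 and one cycle more, so pi is shallow as
   soon as pi o (a b) is.  A decreasing block is undone by such moves on its two
   ends, and each of the three families reaches the identity by explicit
   sequences of moves: in the inductive cases two moves split off fixed points at
   both ends of the permutation, leaving a smaller member of the same family.
   The moves are carried out on value tables [nat -> nat], where they are plain
   arithmetic. *)

From mathcomp Require Import all_boot all_order all_fingroup zify.
Set Implicit Arguments. Unset Strict Implicit. Unset Printing Implicit Defensive.

Lemma sum_ord_eq_mul n (k : 'I_n) (F : 'I_n -> nat) :
  \sum_(x < n) (x == k) * F x = F k.
Proof. by rewrite (bigD1 k) //= eqxx mul1n big1 ?addn0 // => x /negbTE ->. Qed.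

Lemma sum_ord_range n c d :
  \sum_(x < n) ((c <= x) && (x < d) : nat) = minn d n - minn c n.
Proof.
elim: n => [|n IHn]; first by rewrite big_ord0 !minn0.
by rewrite big_ord_recr /= IHn; lia.
Qed.

Lemma Istat_sum n (p : 'S_n) :
  Istat p = \sum_(x < n) \sum_(y < n) ((x < y) && (p y < p x) : nat).
Proof.
rewrite /Istat -sum1_card pair_big /= big_mkcond /=.
by apply: eq_bigr => -[x y] _; rewrite inE /=; case: ifP.
Qed.

Lemma card_porbits_le n (p : 'S_n) : #|porbits p| <= n.
Proof. by rewrite -[X in _ <= X]card_ord leq_imset_card. Qed.

Lemma shallow1 n : shallow (1 : 'S_n)%g.
Proof.
have card_porbits1 : #|porbits (1 : 'S_n)%g| = n.
  rewrite card_imset ?card_ord // => x y eq_xy.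
  have : y \in porbit 1%g x by rewrite eq_xy porbit_id.
  by case/porbitP => i ->; rewrite expg1n perm1.
rewrite /shallow /Tstat card_porbits1 subnn Istat_sum /Dstat.
rewrite big1 => [|x _]; last by rewrite big1 // => y _; rewrite !perm1; lia.
by rewrite big1 // => x _; rewrite perm1 subnn.
Qed.

Lemma Tstat_mul_tperm n (p : 'S_n) (a b : 'I_n) :
  a != b -> a \in porbit p b -> Tstat p = (Tstat (tperm a b * p)%g).+1.
Proof.
move=> neq_ab ab_cycle; rewrite /Tstat.
have := porbits_mul_tperm p a b; rewrite /= ab_cycle neq_ab /= addn0 => card_eq.
by have := card_porbits_le (tperm a b * p)%g; rewrite card_eq; lia.
Qed.

Lemma val_tperm n (a b x : 'I_n) :
  (tperm a b x : nat) = if x == a :> nat then b : nat else if x == b :> nat then a else x.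
Proof.
rewrite !val_eqE.
case: tpermP => [->|->|/eqP/negbTE -> /eqP/negbTE -> //]; first by rewrite eqxx.
by case: eqP => [->|]; rewrite ?eqxx.
Qed.

Section TranspositionMove.

Variables (n : nat) (p : 'S_n) (a b : 'I_n).
Hypotheses (lt_ab : a < b) (pb_le_a : p b <= a) (b_le_pa : b <= p a).

Let neq_ab : a != b. Proof. by rewrite -val_eqE /= neq_ltn lt_ab. Qed.

Lemma Dstat_mul_tperm : Dstat p = Dstat (tperm a b * p)%g + (b - a).*2.
Proof.
rewrite /Dstat (bigD1 a) // (bigD1 b) 1?eq_sym //= [in RHS](bigD1 a) //.
rewrite [in RHS](bigD1 b) 1?eq_sym //= !permM tpermL tpermR.
under [in RHS]eq_bigr => x /andP[xa xb] do rewrite permM tpermD 1?eq_sym //.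
lia.
Qed.

Hypothesis between : forall c : 'I_n, a < c < b -> p b < p c < p a.

Lemma inversion_tperm (x y : 'I_n) :
  ((x < y) && (p y < p x) : nat) =
  ((tperm a b x < tperm a b y) && (p y < p x) : nat)
  + (x == a) * ((a < y) && (y < b.+1)) + (y == b) * ((a < x) && (x < b)).
Proof.
have := @between x; have := @between y.
rewrite !val_tperm -!val_eqE /=.
case: (x =P a :> nat) => [/val_inj ?|?]; case: (x =P b :> nat) => [/val_inj ?|?];
  case: (y =P a :> nat) => [/val_inj ?|?]; case: (y =P b :> nat) => [/val_inj ?|?];
  subst; lia.
Qed.

Lemma Istat_mul_tperm : Istat p + 1 = Istat (tperm a b * p)%g + (b - a).*2.
Proof.
have b_lt_n := ltn_ord b.
have Istat_tpE : Istat (tperm a b * p)%g =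
    \sum_(x < n) \sum_(y < n) ((tperm a b x < tperm a b y) && (p y < p x) : nat).
  rewrite Istat_sum (reindex_inj (@perm_inj _ (tperm a b))); apply: eq_bigr => x _.
  rewrite (reindex_inj (@perm_inj _ (tperm a b))); apply: eq_bigr => y _.
  by rewrite !permM !tpermK.
have row_a : \sum_(x < n) \sum_(y < n) (x == a) * ((a < y) && (y < b.+1)) = b - a.
  under eq_bigr do rewrite -big_distrr /=.
  by rewrite sum_ord_eq_mul sum_ord_range; lia.
have column_b :
    \sum_(x < n) \sum_(y < n) (y == b) * ((a < x) && (x < b)) = b - a - 1.
  under eq_bigr do rewrite sum_ord_eq_mul.
  by rewrite sum_ord_range; lia.
have -> : Istat p =
    \sum_(x < n) \sum_(y < n) ((tperm a b x < tperm a b y) && (p y < p x) : nat)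
    + \sum_(x < n) \sum_(y < n) (x == a) * ((a < y) && (y < b.+1))
    + \sum_(x < n) \sum_(y < n) (y == b) * ((a < x) && (x < b)).
  rewrite Istat_sum -!big_split; apply: eq_bigr => x _.
  by rewrite -!big_split; apply: eq_bigr => y _; apply: inversion_tperm.
by rewrite -Istat_tpE row_a column_b; lia.
Qed.

Lemma shallow_of_mul_tperm : a \in porbit p b -> shallow (tperm a b * p)%g -> shallow p.
Proof.
move=> ab_cycle; rewrite /shallow (Tstat_mul_tperm neq_ab ab_cycle) Dstat_mul_tperm.
by have := Istat_mul_tperm; lia.
Qed.

End TranspositionMove.

Definition shallow_table n (f : nat -> nat) :=
  forall p : 'S_n, (forall x : 'I_n, p x = f x :> nat) -> shallow p.

Definition rev_table m x := m - 1 - x.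

Definition dsum_table a (f g : nat -> nat) x := if x < a then f x else a + g (x - a).

Definition ssum_table a b (f g : nat -> nat) x := if x < a then b + f x else g (x - a).

(* [id_p ⊕ f ⊕ id]: the table [f] of size [m] moved to positions [p, p + m). *)
Definition block_table p m (f : nat -> nat) x := if p <= x < p + m then p + f (x - p) else x.

Lemma val_delta m (x : 'I_m) : delta m x = rev_table m x :> nat.
Proof. by rewrite permE /= /rev_table; lia. Qed.

Lemma val_dsum a b (al : 'S_a) (be : 'S_b) (f g : nat -> nat) :
    (forall y, al y = f y :> nat) -> (forall y, be y = g y :> nat) ->
  forall x, dsum al be x = dsum_table a f g x :> nat.
Proof.
move=> alE beE x; rewrite permE /dsum_fun /dsum_table.
by case: splitP => y -> /=; rewrite ?alE ?beE ?ltn_ord ?addKn.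
Qed.

Lemma val_ssum a b (al : 'S_a) (be : 'S_b) (f g : nat -> nat) :
    (forall y, al y = f y :> nat) -> (forall y, be y = g y :> nat) ->
  forall x, ssum al be x = ssum_table a b f g x :> nat.
Proof.
move=> alE beE x; rewrite permE /ssum_fun /ssum_table.
by case: splitP => y -> /=; rewrite ?alE ?beE ?ltn_ord ?addKn.
Qed.

Lemma shallow_ssum_dsum_delta i j k :
  shallow_table (i + (j + k))
    (ssum_table i (j + k) (rev_table i) (dsum_table j (rev_table j) (rev_table k))) ->
  shallow (ssum (delta i) (dsum (delta j) (delta k))).
Proof.
move=> sh; apply: sh; apply: val_ssum; first exact: val_delta.
by apply: val_dsum; apply: val_delta.
Qed.

Lemma eq_shallow_table n f g :
  (forall x, x < n -> f x = g x) -> shallow_table n g -> shallow_table n f.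
Proof. by move=> eq_fg shg p pE; apply: shg => x; rewrite pE eq_fg. Qed.

Lemma shallow_table_block0 n f : shallow_table n (block_table 0 n f) -> shallow_table n f.
Proof. by apply: eq_shallow_table => x lt_xn; rewrite /block_table lt_xn subn0. Qed.

Lemma shallow_table_id n f : (forall x, x < n -> f x = x) -> shallow_table n f.
Proof.
move=> fE p pE; suff -> : p = 1%g by apply: shallow1.
by apply/permP => x; apply: ord_inj; rewrite pE fE ?perm1.
Qed.

Definition swap_entries (f : nat -> nat) a b x :=
  if x == a then f b else if x == b then f a else f x.

Lemma shallow_table_swap n f a b :
  a < b < n -> f b <= a -> b <= f a ->
  (forall c, a < c < b -> f b < f c < f a) -> f b = a \/ f a = b ->
  shallow_table n (swap_entries f a b) -> shallow_table n f.
Proof.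
move=> /andP[lt_ab lt_bn] fb_le_a b_le_fa between ab_cycle sh_swap p pE.
pose A := Ordinal (ltn_trans lt_ab lt_bn); pose B := Ordinal lt_bn.
apply: (@shallow_of_mul_tperm n p A B); rewrite ?pE //.
- by move=> c; rewrite !pE; apply: between.
- by case: ab_cycle => pE1; [|rewrite porbit_sym]; apply/porbitP; exists 1;
    rewrite expg1; apply: ord_inj; rewrite pE.
- apply: sh_swap => x; rewrite permM pE val_tperm /swap_entries.
  by case: ifP => _; [|case: ifP].
Qed.

Ltac case_ifs := repeat match goal with
  | |- context [if ?c then _ else _] =>
      let E := fresh in destruct c eqn:E; try (exfalso; lia)
  end.

Ltac table_lia := rewrite /swap_entries /block_table /ssum_table /dsum_table /rev_table;
  intros; case_ifs; lia.

Lemma shallow_table_rev_block n p m f :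
  p + m <= n -> (forall x, p <= x < p + m -> f x = 2 * p + m - 1 - x) ->
  shallow_table n (fun x => if p <= x < p + m then x else f x) -> shallow_table n f.
Proof.
elim/ltn_ind: m p f => m IHm p f le_pm_n fE sh_fixed.
have [m_lt2|m_ge2] := ltnP m 2.
  by apply: eq_shallow_table sh_fixed => x _; move: (fE x); case_ifs; lia.
apply: (@shallow_table_swap n f p (p + m - 1)); rewrite ?fE; try lia.
  by move=> c ?; rewrite !fE; lia.
apply: (IHm (m - 2) _ (p + 1)); [lia | lia | |].
  by move=> x ?; rewrite /swap_entries; move: (fE x); case_ifs; lia.
apply: eq_shallow_table sh_fixed => x _; rewrite /swap_entries.
by move: (fE x) (fE p) (fE (p + m - 1)); case_ifs; lia.
Qed.

Lemma shallow_skew_dec_1_dec i k p n : p + (i + (1 + k)) <= n ->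
  shallow_table n (block_table p (i + (1 + k))
    (ssum_table i (1 + k) (rev_table i) (dsum_table 1 (rev_table 1) (rev_table k)))).
Proof.
elim: i k p => [|i IHi] [|k] p le_n.
- by apply: shallow_table_id; table_lia.
- apply: (@shallow_table_rev_block n (p + 1) k.+1); [lia|table_lia|].
  by apply: shallow_table_id; table_lia.
- apply: (@shallow_table_rev_block n p i.+2); [lia|table_lia|].
  by apply: shallow_table_id; table_lia.
apply: (@shallow_table_swap n _ p (p + i + 1)); try table_lia.
apply: (@shallow_table_swap n _ (p + i + 1) (p + i + k + 2)); try table_lia.
apply: eq_shallow_table (IHi k (p + 1) _); [table_lia | lia].
Qed.

Lemma shallow_skew_dec_dec_1 i j p n : p + (i + (j + 1)) <= n ->
  shallow_table n (block_table p (i + (j + 1))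
    (ssum_table i (j + 1) (rev_table i) (dsum_table j (rev_table j) (rev_table 1)))).
Proof.
elim: i j p => [|i IHi] [|j] p le_n.
- by apply: shallow_table_id; table_lia.
- apply: (@shallow_table_rev_block n p j.+1); [lia|table_lia|].
  by apply: shallow_table_id; table_lia.
- apply: (@shallow_table_rev_block n p i.+2); [lia|table_lia|].
  by apply: shallow_table_id; table_lia.
apply: (@shallow_table_swap n _ p (p + i + j + 1)); try table_lia.
apply: (@shallow_table_swap n _ (p + i + j + 1) (p + i + j + 2)); try table_lia.
apply: eq_shallow_table (IHi j (p + 1) _); [table_lia | lia].
Qed.

Lemma shallow_skew12 k p n : p + (2 + k) <= n ->
  shallow_table n (block_table p (2 + k) (ssum_table 2 k id (rev_table k))).
Proof.
case: k => [|k] le_n; first by apply: shallow_table_id; table_lia.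
apply: (@shallow_table_swap n _ (p + 1) (p + k + 2)); try table_lia.
apply: (@shallow_table_swap n _ p (p + 1)); try table_lia.
apply: (@shallow_table_rev_block n (p + 1) k.+1); [lia|table_lia|].
by apply: shallow_table_id; table_lia.
Qed.

Lemma shallow_skew21 j k :
  shallow_table (2 + (j + k))
    (ssum_table 2 (j + k) (rev_table 2) (dsum_table j (rev_table j) (rev_table k))).
Proof.
case: j => [|[|j]].
- apply: (@shallow_table_rev_block _ 0 (k + 2)); [lia|table_lia|].
  by apply: shallow_table_id; table_lia.
- apply: (@shallow_table_swap _ _ 0 2); try table_lia.
  by apply: eq_shallow_table (@shallow_skew12 k 1 _ _); [table_lia|lia].
apply: (@shallow_table_swap _ _ 0 (j + 3)); try table_lia.
apply: (@shallow_table_swap _ _ 1 (j + 2)); try table_lia.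
apply: (@shallow_table_rev_block _ 2 j); [lia|table_lia|].
by apply: eq_shallow_table (@shallow_skew12 k (j + 2) _ _); [table_lia|lia].
Qed.

Unset Implicit Arguments.

Theorem lemma4p2 (i j k : nat) :
  shallow (ssum (delta 2) (dsum (delta j) (delta k))) /\
  shallow (ssum (delta i) (dsum (delta 1) (delta k))) /\
  shallow (ssum (delta i) (dsum (delta j) (delta 1))).
Proof.
split; [|split]; apply: shallow_ssum_dsum_delta.
- exact: shallow_skew21.
- by apply: shallow_table_block0; apply: shallow_skew_dec_1_dec.
- by apply: shallow_table_block0; apply: shallow_skew_dec_dec_1.
Qed.
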